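(* Let $L\subseteq Q$ be a dense extension of symmetric Leibniz algebras, and suppose $Q$ is a multiplicatively prime algebra of quotients of $L$. Then $I\subseteq Q$ is a dense extension for every nonzero ideal $I$ of $L$.
   Context: A symmetric Leibniz algebra satisfies both $[x,[y,z]]=[[x,y],z]-[[x,z],y]$ and $[x,[y,z]]=[[x,y],z]+[y,[x,z]]$. For $x\in Q$, $R_x(u)=[u,x]$, $L_x(u)=[x,u]$; $M(Q)$ is the associative subalgebra of $\mathrm{End}(Q)$ generated by the identity and all $R_x,L_x$. A subalgebra $K$ of $Q$ is dense ($K\subseteq Q$ is a dense extension) if the only $\mu\in M(Q)$ with $\mu(K)=\{0\}$ is $\mu=0$. A Leibniz algebra is prime if $[I,J]\ne\{0\}$ for all nonzero ideals $I,J$; an associative algebra is prime if the product of any two nonzero two-sided ideals is nonzero. $Q$ is multiplicatively prime if $Q$ and $M(Q)$ are prime. With $\mathscr{A}_Q(L)$ the associative algebra generated by $R_x,L_y$ ($x,y\in L$), ${}_L(q)=\mathbb{F}q+\{\sum\xi_i(q):\xi_i\in\mathscr{A}_Q(L)\}$, $(L:q)=\{x\in L:[x,{}_L(q)]\subseteq L,[{}_L(q),x]\subseteq L\}$; $Q$ is an algebra of quotients of $L$ if for all $p,q\in Q$, $p\ne0$, there is $x\in(L:q)$ with $[x,p]\ne0$ or $y\in(L:q)$ with $[p,y]\ne0$. *)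

From HB Require Import structures.
From mathcomp Require Import all_boot all_order all_algebra.
Set Implicit Arguments. Unset Strict Implicit. Unset Printing Implicit Defensive.
Import GRing.Theory.
Local Open Scope ring_scope.

Section LeibnizDefs.
Variables (F : fieldType) (Q : lmodType F) (br : Q -> Q -> Q).

Definition bilinear_br : Prop :=
  (forall (a : F) (x y z : Q), br (a *: x + y) z = a *: br x z + br y z) /\
  (forall (a : F) (x y z : Q), br z (a *: x + y) = a *: br z x + br z y).

Definition sym_leibniz : Prop :=
  bilinear_br /\
  (forall x y z, br x (br y z) = br (br x y) z - br (br x z) y) /\
  (forall x y z, br x (br y z) = br (br x y) z + br y (br x z)).

Definition Rop (x : Q) : Q -> Q := fun u => br u x.
Definition Lop (x : Q) : Q -> Q := fun u => br x u.

Definition subspace (S : Q -> Prop) : Prop :=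
  S 0 /\ forall (a : F) x y, S x -> S y -> S (a *: x + y).

Definition subalgebra (S : Q -> Prop) : Prop :=
  subspace S /\ forall x y, S x -> S y -> S (br x y).

Definition ideal_of (L I : Q -> Prop) : Prop :=
  subspace I /\ (forall x, I x -> L x) /\
  (forall x y, I x -> L y -> I (br x y)) /\
  (forall x y, I x -> L y -> I (br y x)).

Definition nonzero_set (S : Q -> Prop) : Prop := exists x, S x /\ x <> 0.

Inductive inMQ : (Q -> Q) -> Prop :=
  | MQ_id : inMQ id
  | MQ_R x : inMQ (Rop x)
  | MQ_L x : inMQ (Lop x)
  | MQ_zero : inMQ (fun _ => 0)
  | MQ_add f g : inMQ f -> inMQ g -> inMQ (fun u => f u + g u)
  | MQ_scale (a : F) f : inMQ f -> inMQ (fun u => a *: f u)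
  | MQ_comp f g : inMQ f -> inMQ g -> inMQ (fun u => f (g u)).

Inductive inAQ (L : Q -> Prop) : (Q -> Q) -> Prop :=
  | AQ_R x : L x -> inAQ L (Rop x)
  | AQ_L x : L x -> inAQ L (Lop x)
  | AQ_add f g : inAQ L f -> inAQ L g -> inAQ L (fun u => f u + g u)
  | AQ_scale (a : F) f : inAQ L f -> inAQ L (fun u => a *: f u)
  | AQ_comp f g : inAQ L f -> inAQ L g -> inAQ L (fun u => f (g u)).

Definition zero_map (f : Q -> Q) : Prop := forall u, f u = 0.

Definition dense (K : Q -> Prop) : Prop :=
  forall mu, inMQ mu -> (forall k, K k -> mu k = 0) -> zero_map mu.

Definition ideal_Q (I : Q -> Prop) : Prop :=
  subspace I /\ (forall x y, I x -> I (br x y)) /\ (forall x y, I x -> I (br y x)).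

Definition prime_leibniz : Prop :=
  forall I J, ideal_Q I -> ideal_Q J -> nonzero_set I -> nonzero_set J ->
    exists x y, I x /\ J y /\ br x y <> 0.

Definition ideal_MQ (A : (Q -> Q) -> Prop) : Prop :=
  (forall f, A f -> inMQ f) /\ A (fun _ => 0) /\
  (forall (a : F) f g, A f -> A g -> A (fun u => a *: f u + g u)) /\
  (forall f g, inMQ f -> A g -> A (fun u => f (g u))) /\
  (forall f g, A f -> inMQ g -> A (fun u => f (g u))).

Definition nonzero_ideal_MQ (A : (Q -> Q) -> Prop) : Prop :=
  exists f, A f /\ ~ zero_map f.

(* the product ideal AB (spanned by the products ab) is nonzero *)
Definition prime_MQ : Prop :=
  forall A B, ideal_MQ A -> ideal_MQ B -> nonzero_ideal_MQ A -> nonzero_ideal_MQ B ->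
    exists f g, A f /\ B g /\ ~ zero_map (fun u => f (g u)).

Definition mult_prime : Prop := prime_leibniz /\ prime_MQ.

Definition Lq (L : Q -> Prop) (q : Q) (v : Q) : Prop :=
  exists (a : F) xi, inAQ L xi /\ v = a *: q + xi q.

Definition Lcolon (L : Q -> Prop) (q : Q) (x : Q) : Prop :=
  L x /\ (forall v, Lq L q v -> L (br x v)) /\ (forall v, Lq L q v -> L (br v x)).

Definition algebra_of_quotients (L : Q -> Prop) : Prop :=
  forall p q, p <> 0 ->
    (exists x, Lcolon L q x /\ br x p <> 0) \/ (exists y, Lcolon L q y /\ br p y <> 0).

End LeibnizDefs.

From mathcomp Require Import all_boot all_order all_algebra.
Set Implicit Arguments. Unset Strict Implicit. Unset Printing Implicit Defensive.
Import GRing.Theory.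
Local Open Scope ring_scope.

(* Let mu in M(Q) vanish on I.  For i in I the maps mu \o R_i and mu \o L_i
   vanish on L (as [L, I] + [I, L] lies in I), hence everywhere by density of L;
   inducting over the generators of M(Q) shows that mu vanishes on M(Q) I, so the
   ideal {q | mu (M(Q) q) = 0} of Q is nonzero and killed by mu.  In a prime algebra every nonzero ideal K of Q is dense: the
   annihilator of K in M(Q) and the set of maps with range in K are ideals of
   M(Q) whose product is zero, and the latter is nonzero since [K, Q] <> 0. *)

Section MultiplicationAlgebra.
Variables (F : fieldType) (Q : lmodType F) (br : Q -> Q -> Q).
Hypothesis br_bilinear : bilinear_br br.

Lemma inMQ_lin f : inMQ br f ->
  forall (a : F) x y, f (a *: x + y) = a *: f x + f y.
Proof.
case: br_bilinear => brl brr; elim=> //=.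
- by move=> x a u v; apply: brl.
- by move=> a u v; rewrite scaler0 addr0.
- move=> g h _ IHg _ IHh a u v; rewrite IHg IHh scalerDr.
  by rewrite -!addrA; congr (_ + _); rewrite addrCA.
- by move=> b g _ IH a u v; rewrite IH scalerDr !scalerA mulrC.
- by move=> g h _ IHg _ IHh a u v; rewrite IHh IHg.
Qed.

Lemma inMQD f : inMQ br f -> forall x y, f (x + y) = f x + f y.
Proof. by move=> hf x y; rewrite -{1}(scale1r x) inMQ_lin // scale1r. Qed.

Lemma inMQ0 f : inMQ br f -> f 0 = 0.
Proof.
move=> hf; have := inMQD hf 0 0; rewrite addr0 => f00.
by apply: (addrI (f 0)); rewrite addr0 -f00.
Qed.

Lemma inMQZ f : inMQ br f -> forall a x, f (a *: x) = a *: f x.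
Proof. by move=> hf a x; rewrite -(addr0 (a *: x)) inMQ_lin // inMQ0 // addr0. Qed.

Lemma ideal_Q_inMQ_closed K : ideal_Q br K ->
  forall g, inMQ br g -> forall k, K k -> K (g k).
Proof.
case=> [[K0 KD] [KR KL]] g; elim=> //=.
- by move=> x k Kk; apply: KR.
- by move=> x k Kk; apply: KL.
- by move=> f h _ IHf _ IHh k Kk; rewrite -(scale1r (f k)); apply: KD; auto.
- by move=> a f _ IH k Kk; rewrite -(addr0 (a *: f k)); apply: KD; auto.
- by move=> f h _ IHf _ IHh k Kk; apply: IHf; apply: IHh.
Qed.

Definition ann_MQ (K : Q -> Prop) (f : Q -> Q) : Prop :=
  inMQ br f /\ forall k, K k -> f k = 0.

Definition into_MQ (K : Q -> Prop) (h : Q -> Q) : Prop :=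
  inMQ br h /\ forall q, K (h q).

Lemma ideal_MQ_ann K : ideal_Q br K -> ideal_MQ br (ann_MQ K).
Proof.
move=> hK; split; first by move=> f [].
split; first by split; [exact: MQ_zero | by []].
split.
  move=> a f g [hf kf] [hg kg]; split; first exact: MQ_add (MQ_scale a hf) hg.
  by move=> k Kk; rewrite kf // kg // scaler0 addr0.
split.
  move=> f g hf [hg kg]; split; first exact: MQ_comp.
  by move=> k Kk; rewrite kg // inMQ0.
move=> f g [hf kf] hg; split; first exact: MQ_comp.
by move=> k Kk; apply: kf; apply: ideal_Q_inMQ_closed hK _ hg _ Kk.
Qed.

Lemma ideal_MQ_into K : ideal_Q br K -> ideal_MQ br (into_MQ K).
Proof.
move=> hK; have [[K0 KD] _] := hK.
split; first by move=> f [].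
split; first by split; [exact: MQ_zero | by []].
split.
  move=> a f g [hf kf] [hg kg]; split; first exact: MQ_add (MQ_scale a hf) hg.
  by move=> q; apply: KD.
split.
  move=> f g hf [hg kg]; split; first exact: MQ_comp.
  by move=> q; apply: ideal_Q_inMQ_closed hK _ hf _ (kg q).
by move=> f g [hf kf] hg; split; first exact: MQ_comp.
Qed.

Lemma nonzero_ideal_MQ_into K : prime_leibniz br -> ideal_Q br K ->
  nonzero_set K -> nonzero_ideal_MQ (into_MQ K).
Proof.
move=> primeQ hK [k0 [Kk0 k0_neq0]].
have hT : ideal_Q br (fun _ => True) by [].
have [x [y [Kx [_ xy_neq0]]]] :=
  primeQ K _ hK hT (ex_intro _ k0 (conj Kk0 k0_neq0)) (ex_intro _ k0 (conj I k0_neq0)).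
exists (Lop br x); split; last by move=> /(_ y).
by split; [exact: MQ_L | move=> q; case: hK => _ [KR _]; exact: KR].
Qed.

Lemma prime_ideal_dense K : prime_leibniz br -> prime_MQ br ->
  ideal_Q br K -> nonzero_set K -> dense br K.
Proof.
move=> primeQ primeMQ hK nK mu hmu mu_K u.
case: (eqVneq (mu u) 0) => // mu_u_neq0; exfalso.
have nA : nonzero_ideal_MQ (ann_MQ K).
  by exists mu; split=> // /(_ u) /eqP; rewrite (negbTE mu_u_neq0).
have [f [g [[_ f_K] [[_ g_K] fg_neq0]]]] := primeMQ _ _ (ideal_MQ_ann hK)
  (ideal_MQ_into hK) nA (nonzero_ideal_MQ_into primeQ hK nK).
by apply: fg_neq0 => v; apply: f_K.
Qed.

Definition MQ_kernel (mu : Q -> Q) (q : Q) : Prop :=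
  forall h, inMQ br h -> mu (h q) = 0.

Lemma ideal_MQ_kernel mu : inMQ br mu -> ideal_Q br (MQ_kernel mu).
Proof.
move=> hmu; split; [split|split].
- by move=> h hh; rewrite (inMQ0 hh) (inMQ0 hmu).
- by move=> a x y Kx Ky h hh; rewrite !inMQ_lin // Kx // Ky // scaler0 addr0.
- by move=> x y Kx h hh; exact: (Kx _ (MQ_comp hh (MQ_R br y))).
- by move=> x y Kx h hh; exact: (Kx _ (MQ_comp hh (MQ_L br y))).
Qed.

Section DenseIdeal.
Variables (L I : Q -> Prop).
Hypotheses (L_dense : dense br L) (hI : ideal_of br L I).

Lemma ann_ideal_br f : inMQ br f -> (forall i, I i -> f i = 0) ->
  forall i, I i -> forall q, f (br q i) = 0 /\ f (br i q) = 0.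
Proof.
case: hI => _ [_ [IL LI]] hf f_I i Ii q; split.
- by apply: (L_dense (MQ_comp hf (MQ_R br i))) => l Ll; apply: f_I; apply: LI.
- by apply: (L_dense (MQ_comp hf (MQ_L br i))) => l Ll; apply: f_I; apply: IL.
Qed.

Lemma ann_ideal_comp h : inMQ br h -> forall f, inMQ br f ->
  (forall i, I i -> f i = 0) -> forall i, I i -> f (h i) = 0.
Proof.
elim=> /=.
- by move=> f _ f_I i Ii; apply: f_I.
- by move=> x f hf f_I i Ii; case: (ann_ideal_br hf f_I Ii x).
- by move=> x f hf f_I i Ii; case: (ann_ideal_br hf f_I Ii x).
- by move=> f hf _ i _; rewrite inMQ0.
- move=> h1 h2 _ IH1 _ IH2 f hf f_I i Ii.
  by rewrite inMQD // IH1 // IH2 // addr0.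
- by move=> a h1 _ IH1 f hf f_I i Ii; rewrite inMQZ // IH1 // scaler0.
- move=> h1 h2 hh1 IH1 _ IH2 f hf f_I i Ii.
  by apply: (IH2 _ (MQ_comp hf hh1)) => // j Ij; apply: IH1.
Qed.

Lemma ideal_sub_MQ_kernel mu : inMQ br mu -> (forall i, I i -> mu i = 0) ->
  forall i, I i -> MQ_kernel mu i.
Proof. move=> hmu mu_I i Ii h hh; exact: ann_ideal_comp hh _ hmu mu_I _ Ii. Qed.

End DenseIdeal.

End MultiplicationAlgebra.

Theorem corollary6p6 (F : fieldType) (Q : lmodType F) (br : Q -> Q -> Q)
  (L : Q -> Prop) :
  sym_leibniz br ->
  subalgebra br L ->
  dense br L ->
  mult_prime br ->
  algebra_of_quotients br L ->
  forall I : Q -> Prop, ideal_of br L I -> nonzero_set I -> dense br I.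
Proof.
move=> [br_bilinear _] _ L_dense [primeQ primeMQ] _ I hI [i0 [Ii0 i0_neq0]] mu hmu mu_I.
have I_sub := ideal_sub_MQ_kernel br_bilinear L_dense hI hmu mu_I.
have nK : nonzero_set (MQ_kernel br mu) by exists i0; split => //; apply: I_sub.
apply: (prime_ideal_dense br_bilinear primeQ primeMQ (ideal_MQ_kernel br_bilinear hmu) nK hmu).
by move=> k Kk; apply: (Kk id (MQ_id br)).
Qed.
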